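(* Let $G$ be a connected partial cube with $\Theta$-classes $E_1,\ldots,E_d$. For each $k$ let $U_k$ and $U_k'$ be the two connected components of $G-E_k$, and for $k,l\in\{1,\ldots,d\}$ set $m_{kl}^{11}=|E(U_k)\cap E(U_l)|$, $m_{kl}^{10}=|E(U_k)\cap E(U_l')|$, $m_{kl}^{01}=|E(U_k')\cap E(U_l)|$, $m_{kl}^{00}=|E(U_k')\cap E(U_l')|$. Then $$\sum_{e\in E(G)}\sum_{f\in E(G)}\widehat{d}(e,f)^2=2\widehat{W}_e(G)+4\sum_{k=1}^{d-1}\sum_{l=k+1}^{d}\big(m_{kl}^{11}m_{kl}^{00}+m_{kl}^{10}m_{kl}^{01}\big).$$
   Context: A partial cube is a graph isomorphic to an isometric subgraph of a hypercube. The Djoković–Winkler relation $\Theta$ on $E(G)$: $xy\,\Theta\,uv$ iff $d(x,u)+d(y,v)\neq d(x,v)+d(y,u)$, with $d$ the shortest-path distance. In a partial cube $\Theta$ is an equivalence relation whose classes are the $\Theta$-classes, and removing the edges of a $\Theta$-class leaves exactly two connected components. For edges $e=ab$, $f=xy$, $\widehat{d}(e,f)=\min\{d(a,x),d(a,y),d(b,x),d(b,y)\}$ (so $\widehat d(e,e)=0$), and $\widehat{W}_e(G)=\sum_{\{e,f\}\subseteq E(G)}\widehat{d}(e,f)$, the sum over unordered pairs of distinct edges. *)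

(* A finite simple graph is a symmetric irreflexive relation
   [g : rel T] on a finType T. *)
From mathcomp Require Import all_boot.
Set Implicit Arguments. Unset Strict Implicit. Unset Printing Implicit Defensive.

Section Graph.
Variables (T : finType) (g : rel T).

Fixpoint walkn (n : nat) (x y : T) : bool :=
  if n is n'.+1 then [exists z, g x z && walkn n' z y] else x == y.

(* shortest-path distance: least n with a walk of length n (a shortest walk
   is a path, of length < #|T| in a connected graph) *)
Definition gdist (x y : T) : nat := find (fun n => walkn n x y) (iota 0 #|T|).

Definition edges : {set {set T}} := [set [set p.1; p.2] | p in [set p : T * T | g p.1 p.2]].

Definition edges_in (U : {set T}) : {set {set T}} := [set f in edges | f \subset U].

Definition edist (E F : {set T}) : nat :=
  \big[minn/#|T|]_(a in E) \big[minn/#|T|]_(b in F) gdist a b.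

(* \hat W_e(G): sum over unordered pairs of distinct edges *)
Definition edge_wiener : nat :=
  \sum_(E in edges) \sum_(F in edges | enum_rank E < enum_rank F) edist E F.

(* Djokovic-Winkler relation on edges (independent of endpoint labelling) *)
Definition theta (E F : {set T}) : bool :=
  [exists x, exists y, exists u, exists v,
    [&& E == [set x; y], F == [set u; v], g x y, g u v &
        gdist x u + gdist y v != gdist x v + gdist y u]].

Definition theta_class (C : {set {set T}}) : Prop :=
  exists2 f, f \in edges & C = [set h in edges | theta f h].

Definition simple_graph : Prop := symmetric g /\ irreflexive g.
Definition connected_graph : Prop := forall x y, connect g x y.

Definition partial_cube : Prop :=
  exists n (f : T -> {ffun 'I_n -> bool}),
    forall x y, gdist x y = #|[set i | f x i != f y i]|.

Definition del_edges (C : {set {set T}}) : rel T :=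
  [rel x y | g x y && ([set x; y] \notin C)].

Definition component_of (C : {set {set T}}) (U : {set T}) : Prop :=
  exists x, U = [set y | connect (del_edges C) x y].

End Graph.

From mathcomp Require Import all_boot zify.
Set Implicit Arguments. Unset Strict Implicit. Unset Printing Implicit Defensive.

(* Fix an isometric embedding f of G into a hypercube. Every edge flips exactly
   one coordinate, and two edges are in relation Theta iff they flip the same
   one; so the Theta-classes E_k correspond to the coordinates c_k flipped by
   some edge, and the two components of G - E_k are the half-spaces
   {f(y)_(c_k) = b}. For edges e, h, \hat d(e,h) is the number of coordinates
   on which every endpoint of e disagrees with every endpoint of h, i.e. the
   sum over k of the 0/1 indicator that the cut of E_k separates e from h.
   Squaring gives the sum of the indicators plus twice the sum over pairs
   k < l of their products. Summed over all (e,h), the first part is 2 W_e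
   (the diagonal vanishes and \hat d is symmetric), and e, h are separated by
   both cuts k and l iff they lie in opposite quadrants of the two splits,
   which gives 2 (m^11 m^00 + m^10 m^01). *)

Lemma sum_sym_pairs (I : finType) (P : pred I) (r : I -> nat) (w : I -> I -> nat) :
  injective r -> (forall i j, P i -> P j -> w i j = w j i) ->
  \sum_(i | P i) \sum_(j | P j) w i j
  = \sum_(i | P i) w i i + 2 * \sum_(i | P i) \sum_(j | P j && (r i < r j)) w i j.
Proof.
move=> r_inj w_sym.
have split_row i : P i -> \sum_(j | P j) w i j =
    w i i + \sum_(j | P j && (r i < r j)) w i j + \sum_(j | P j && (r j < r i)) w i j.
  move=> Pi; rewrite (bigD1 i) //= -addnA; congr (_ + _).
  rewrite (bigID (fun j => r i < r j)) /=; congr (_ + _); apply: eq_bigl => j.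
  - by case: (eqVneq j i) => [->|]; rewrite ?ltnn ?andbF ?andbT.
  - case: (eqVneq j i) => [->|nji]; rewrite ?ltnn ?andbF ?andbT //.
    by rewrite -leqNgt ltn_neqAle (inj_eq r_inj) nji.
rewrite (eq_bigr _ split_row) !big_split /= mul2n -addnA -addnn; congr (_ + (_ + _)).
rewrite (exchange_big_dep P) /=; last by move=> i j _ /andP[].
apply: eq_bigr => j Pj; apply: eq_big => [i|i /andP[Pi _]]; first by rewrite Pj.
exact: w_sym.
Qed.

Lemma sqr_sum_bool (d : nat) (a : 'I_d -> bool) :
  (\sum_k (a k : nat)) ^ 2
  = \sum_k (a k : nat) + 2 * \sum_(k < d) \sum_(l < d | k < l) (a k * a l).
Proof.
rewrite -mulnn big_distrlr /= (sum_sym_pairs val_inj); last by move=> k l _ _; rewrite mulnC.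
by congr (_ + _); apply: eq_bigr => k _; case: (a k).
Qed.

Lemma bigmin_leq (I : eqType) (r : seq I) (P : pred I) (F : I -> nat) x0 i :
  i \in r -> P i -> \big[minn/x0]_(j <- r | P j) F j <= F i.
Proof.
elim: r => //= j r IH; rewrite inE big_cons => /orP[/eqP<-|ri] Pi.
  by rewrite Pi geq_minl.
case: (P j); last exact: IH.
exact: leq_trans (geq_minr _ _) (IH ri Pi).
Qed.

Lemma leq_bigmin (I : Type) (r : seq I) (P : pred I) (F : I -> nat) x0 m :
  m <= x0 -> (forall i, P i -> m <= F i) -> m <= \big[minn/x0]_(i <- r | P i) F i.
Proof.
move=> m_x0 m_F; apply: (big_ind (leq m)) => // x y mx my.
by rewrite leq_min mx my.
Qed.

Lemma card_set_sum (I : finType) (P : pred I) : #|[set i | P i]| = \sum_i (P i : nat).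
Proof. by rewrite -sum1dep_card big_mkcond. Qed.

Section Quadrants.
Variables (T : finType) (g : rel T).

Definition across (A A' e h : {set T}) : nat :=
  ((e \subset A) && (h \subset A')) + ((e \subset A') && (h \subset A)).

Lemma card_edges_inI A B :
  #|edges_in g A :&: edges_in g B| = \sum_(e in edges g) ((e \subset A) && (e \subset B)).
Proof.
rewrite -sum1_card big_mkcond [RHS]big_mkcond /=; apply: eq_bigr => e _.
by rewrite !inE; case: (e \in edges g) (e \subset A) (e \subset B) => [] [] [].
Qed.

Lemma sum_across_mul (Ak Ak' Al Al' : {set T}) :
  let m (A B : {set T}) := #|edges_in g A :&: edges_in g B| in
  \sum_(e in edges g) \sum_(h in edges g) across Ak Ak' e h * across Al Al' e h
  = 2 * (m Ak Al * m Ak' Al' + m Ak Al' * m Ak' Al).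
Proof.
move=> m.
have quadrants e h : across Ak Ak' e h * across Al Al' e h =
    ((e \subset Ak) && (e \subset Al)) * ((h \subset Ak') && (h \subset Al'))
  + ((e \subset Ak) && (e \subset Al')) * ((h \subset Ak') && (h \subset Al))
  + ((e \subset Ak') && (e \subset Al)) * ((h \subset Ak) && (h \subset Al'))
  + ((e \subset Ak') && (e \subset Al')) * ((h \subset Ak) && (h \subset Al)).
  by rewrite /across; case: (e \subset Ak) (e \subset Ak') (e \subset Al) (e \subset Al')
    (h \subset Ak) (h \subset Ak') (h \subset Al) (h \subset Al') => [] [] [] [] [] [] [] [].
transitivity (m Ak Al * m Ak' Al' + m Ak Al' * m Ak' Al + m Ak' Al * m Ak Al'
   + m Ak' Al' * m Ak Al); last by lia.
rewrite /m !card_edges_inI !big_distrlr -!big_split /=.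
by apply: eq_bigr => e _; rewrite -!big_split; apply: eq_bigr => h _; exact: quadrants.
Qed.

End Quadrants.

Section Distance.
Variables (T : finType) (g : rel T).
Hypotheses (g_irr : irreflexive g) (g_conn : connected_graph g).

Lemma path_walkn (x : T) (p : seq T) : path g x p -> walkn g (size p) x (last x p).
Proof.
elim: p x => [|z p IH] x /=; first by rewrite eqxx.
by case/andP=> gxz gp; apply/existsP; exists z; rewrite gxz IH.
Qed.

Lemma has_short_walkn x y : has (fun n => walkn g n x y) (iota 0 #|T|).
Proof.
have /connectP[p gp ->] := g_conn x y.
case/shortenP: gp => p' gp' up' _; apply/hasP; exists (size p'); last exact: path_walkn.
by rewrite mem_iota add0n; have := max_card (mem (x :: p')); rewrite (card_uniqP up').
Qed.

Lemma gdist_lt x y : gdist g x y < #|T|.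
Proof. by rewrite /gdist -[X in _ < X](size_iota 0) -has_find has_short_walkn. Qed.

Lemma walkn_gdist x y : walkn g (gdist g x y) x y.
Proof. by have := nth_find 0 (has_short_walkn x y); rewrite nth_iota ?add0n ?gdist_lt. Qed.

Lemma gdist_min n x y : walkn g n x y -> gdist g x y <= n.
Proof.
move=> wn; case: (leqP #|T| n) => [Tn|nT]; first exact: ltnW (leq_trans (gdist_lt x y) Tn).
rewrite leqNgt; apply/negP => n_lt.
by have := before_find 0 n_lt; rewrite nth_iota // add0n wn.
Qed.

Lemma gdist_edge x y : g x y -> gdist g x y = 1.
Proof.
move=> gxy; have walk1 : walkn g 1 x y by apply/existsP; exists y; rewrite gxy /=.
apply/eqP; rewrite eqn_leq gdist_min // lt0n; apply: contraTneq gxy => d0.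
by have := walkn_gdist x y; rewrite d0 /= => /eqP->; rewrite g_irr.
Qed.

Lemma gdist_step x y : x != y -> exists2 z, g x z & gdist g z y < gdist g x y.
Proof.
move=> nxy; have := walkn_gdist x y.
case: (gdist g x y) => [/eqP exy|n /existsP[z /andP[gxz wn]]].
  by rewrite exy eqxx in nxy.
by exists z; rewrite // ltnS gdist_min.
Qed.

Lemma edgesP e : reflect (exists x y, g x y /\ e = [set x; y]) (e \in edges g).
Proof.
apply: (iffP imsetP) => [[[x y]] /= |[x [y [gxy ->]]]]; last by exists (x, y); rewrite // inE.
by rewrite inE /= => gxy ->; exists x, y.
Qed.

End Distance.

Section PartialCube.
Variables (T : finType) (g : rel T).
Hypotheses (g_irr : irreflexive g) (g_conn : connected_graph g).
Variables (n : nat) (f : T -> {ffun 'I_n -> bool}).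
Hypothesis f_iso : forall x y, gdist g x y = #|[set i | f x i != f y i]|.

Lemma edge_flip x y : g x y -> exists i, forall j, f y j = f x j (+) (j == i).
Proof.
move=> gxy; have := gdist_edge g_irr g_conn gxy; rewrite f_iso => /eqP/cards1P[i fxy].
exists i => j; move/setP: fxy => /(_ j); rewrite !inE => <-.
by case: (f x j) (f y j) => [] [].
Qed.

Lemma step_flip x z y i : (forall j, f z j = f x j (+) (j == i)) ->
  gdist g z y < gdist g x y -> f x i != f y i.
Proof.
move=> fz; apply: contraTneq => fxy; rewrite -leqNgt !f_iso.
apply: subset_leq_card; apply/subsetP => j; rewrite !inE fz.
by case: (eqVneq j i) => [->|_]; rewrite ?fxy ?eqxx ?addbF.
Qed.

Definition cut (e : {set T}) (c : 'I_n) : bool :=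
  [exists p in e, exists q in e, f p c != f q c].

Lemma cut_pair x y c : cut [set x; y] c = (f x c != f y c).
Proof.
apply/existsP/idP => [[p /andP[e_p /existsP[q /andP[e_q fpq]]]]|fxy].
  by move: e_p e_q fpq; rewrite !inE => /orP[]/eqP-> /orP[]/eqP->; rewrite ?eqxx // eq_sym.
by exists x; rewrite !inE eqxx /=; apply/existsP; exists y; rewrite !inE eqxx orbT.
Qed.

Lemma cut_flip x y i : (forall j, f y j = f x j (+) (j == i)) ->
  forall c, cut [set x; y] c = (c == i).
Proof. by move=> fy c; rewrite cut_pair fy; case: (f x c) (c == i) => [] []. Qed.

Lemma edge_cut e : e \in edges g -> exists i, forall c, cut e c = (c == i).
Proof.
by case/edgesP=> x [y [gxy ->]]; have [i fy] := edge_flip gxy; exists i; exact: cut_flip.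
Qed.

Lemma cut_uniq e i j : e \in edges g -> cut e i -> cut e j -> i = j.
Proof. by case/edge_cut=> c cutE; rewrite !cutE => /eqP-> /eqP->. Qed.

Lemma theta_flip x y u v i j :
  (forall c, f y c = f x c (+) (c == i)) -> (forall c, f v c = f u c (+) (c == j)) ->
  (gdist g x u + gdist g y v != gdist g x v + gdist g y u) = (i == j).
Proof.
have swap (a b p q : bool) : ~~ (p && q) ->
    (a != b) + (a (+) p != b (+) q) = (a != b (+) q) + (a (+) p != b).
  by case: a b p q => [] [] [] [].
(* A coordinate flipped by at most one of the edges contributes equally to both
   sides; a coordinate i flipped by both contributes 2[x_i != u_i] and 2[x_i = u_i]. *)
move=> fy fv; rewrite !f_iso !card_set_sum -!big_split /=.
case: (eqVneq i j) fv => [<-|nij] fv.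
  rewrite [X in X != _](bigD1 i) // [X in _ != X](bigD1 i) //= fy fv eqxx.
  rewrite (eq_bigr (fun c => (f x c != f v c : nat) + (f y c != f u c))).
    by rewrite eqn_add2r; case: (f x i) (f u i) => [] [].
  by move=> c /negbTE ci; rewrite fy fv ci /= -swap ?andbF.
apply/negbTE; rewrite negbK; apply/eqP/eq_bigr => c _; rewrite fy fv /= swap //.
by apply: contra nij => /andP[/eqP<- /eqP<-].
Qed.

Lemma thetaE e h : e \in edges g -> h \in edges g ->
  theta g e h = [exists c, cut e c && cut h c].
Proof.
move=> Ee Eh; apply/idP/existsP => [|[c /andP[]]].
  case/existsP=> x /existsP[y /existsP[u /existsP[v /and5P[/eqP-> /eqP-> gxy guv]]]].
  have [i fy] := edge_flip gxy; have [j fv] := edge_flip guv.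
  rewrite (theta_flip fy fv) => /eqP ij; exists i.
  by rewrite (cut_flip fy) (cut_flip fv) ij eqxx.
case/edgesP: Ee => x [y [gxy ->]]; case/edgesP: Eh => u [v [guv ->]].
have [i fy] := edge_flip gxy; have [j fv] := edge_flip guv.
rewrite (cut_flip fy) (cut_flip fv) => /eqP ci /eqP cj.
apply/existsP; exists x; apply/existsP; exists y; apply/existsP; exists u; apply/existsP; exists v.
by rewrite !eqxx gxy guv (theta_flip fy fv) -ci -cj eqxx.
Qed.

Definition cut_class (c : 'I_n) : {set {set T}} := [set h in edges g | cut h c].

Lemma theta_edge_class e c : e \in edges g -> cut e c ->
  [set h in edges g | theta g e h] = cut_class c.
Proof.
move=> Ee ec; apply/setP => h; rewrite !inE; case Eh: (h \in edges g) => //=.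
rewrite thetaE //; apply/existsP/idP => [[c' /andP[ec' hc']]|hc]; last by exists c; rewrite ec.
by rewrite (cut_uniq Ee ec ec').
Qed.

Lemma theta_classP C : theta_class g C -> exists c, C = cut_class c.
Proof.
case=> e Ee ->; have [c cutE] := edge_cut Ee.
by exists c; apply: theta_edge_class; rewrite // cutE.
Qed.

Lemma connect_del_cut_class c x y :
  connect (del_edges g (cut_class c)) x y = (f x c == f y c).
Proof.
have cut_classE a b : g a b -> ([set a; b] \in cut_class c) = (f a c != f b c).
  move=> gab; rewrite inE cut_pair andbC; case: (f a c != f b c) => //=.
  by apply/edgesP; exists a, b.
apply/idP/idP.
  case/connectP=> p gp ->; elim: p x gp => [|z p IH] x /=; first by rewrite eqxx.
  case/andP=> /andP[gxz]; rewrite cut_classE // negbK => /eqP->; exact: IH.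
elim: {x}_.+1 {-2}x (ltnSn (gdist g x y)) => // m IH x dm fxy.
have [->|nxy] := eqVneq x y; first exact: connect0.
have [z gxz dz] := gdist_step g_conn nxy; have [i fz] := edge_flip gxz.
have ci : c != i by apply: contraTneq (step_flip fz dz) => <-; rewrite fxy.
have fzc : f z c = f x c by rewrite fz (negbTE ci) addbF.
apply: connect_trans (connect1 _) (IH z (leq_trans dz dm) _); last by rewrite fzc.
by rewrite /del_edges /= gxz cut_classE // fzc eqxx.
Qed.

Lemma component_cut_class c U :
  component_of g (cut_class c) U -> exists b, U = [set y | f y c == b].
Proof.
case=> x ->; exists (f x c); apply/setP => y.
by rewrite !inE connect_del_cut_class eq_sym.
Qed.

Lemma components_cut_class c U U' :
  component_of g (cut_class c) U -> component_of g (cut_class c) U' -> U != U' ->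
  exists b, U = [set y | f y c == b] /\ U' = [set y | f y c == ~~ b].
Proof.
move=> /component_cut_class[b ->] /component_cut_class[b' ->] neqU.
by exists b; split=> //; case: b b' neqU => [] [] //; rewrite eqxx.
Qed.

Lemma exists_edge_cut p q c : f p c != f q c -> exists2 h, h \in edges g & cut h c.
Proof.
elim: {p}_.+1 {-2}p (ltnSn (gdist g p q)) => // m IH p dm fpq.
have [epq|npq] := eqVneq p q; first by rewrite epq eqxx in fpq.
have [z gpz dz] := gdist_step g_conn npq; have [i fz] := edge_flip gpz.
have [ci|nci] := eqVneq c i.
  by exists [set p; z]; [apply/edgesP; exists p, z | rewrite (cut_flip fz) ci].
by apply: (IH z (leq_trans dz dm)); rewrite fz (negbTE nci) addbF.
Qed.

Definition sep (e h : {set T}) : {set 'I_n} :=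
  [set c | [forall p in e, forall q in h, f p c != f q c]].

Lemma sep_pair x y u v c : (c \in sep [set x; y] [set u; v]) =
  [&& f x c != f u c, f x c != f v c, f y c != f u c & f y c != f v c].
Proof.
rewrite inE; apply/forall_inP/and4P => [sep_c|[fxu fxv fyu fyv] p].
  have fpq p q : p \in [set x; y] -> q \in [set u; v] -> f p c != f q c.
    by move=> e_p h_q; apply: (forall_inP (sep_c p e_p)).
  by split; apply: fpq; rewrite !inE eqxx ?orbT.
by rewrite !inE => /orP[]/eqP->; apply/forall_inP => q; rewrite !inE => /orP[]/eqP->.
Qed.

Lemma sep_gdist (e h : {set T}) (a b : T) :
  a \in e -> b \in h -> #|sep e h| <= gdist g a b.
Proof.
move=> e_a h_b; rewrite f_iso; apply: subset_leq_card; apply/subsetP => c.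
by rewrite !inE => /forall_inP/(_ a e_a)/forall_inP/(_ b h_b).
Qed.

Lemma gdist_sep e h : e \in edges g -> h \in edges g ->
  exists a, exists2 b, (a \in e) && (b \in h) & gdist g a b <= #|sep e h|.
Proof.
case/edgesP=> x [y [gxy ->]] /edgesP[u [v [guv ->]]].
have [i fy] := edge_flip gxy; have [j fv] := edge_flip guv.
have fe c p : c != i -> p \in [set x; y] -> f p c = f x c.
  by move=> ci; rewrite !inE => /orP[]/eqP->; rewrite ?fy ?(negbTE ci) ?addbF.
have fh c q : c != j -> q \in [set u; v] -> f q c = f u c.
  by move=> cj; rewrite !inE => /orP[]/eqP->; rewrite ?fv ?(negbTE cj) ?addbF.
(* a and b can only differ on coordinates flipped by neither edge. *)
pose a := if f x i == f u i then x else y; pose b := if f u j == f a j then u else v.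
have e_a : a \in [set x; y] by rewrite /a !inE; case: ifP; rewrite eqxx ?orbT.
have h_b : b \in [set u; v] by rewrite /b !inE; case: ifP; rewrite eqxx ?orbT.
have fa : f a i = f u i.
  by rewrite /a; case: ifP => [/eqP //|]; rewrite fy eqxx; case: (f x i) (f u i) => [] [].
have fb : f b j = f a j.
  by rewrite /b; case: ifP => [/eqP //|]; rewrite fv eqxx; case: (f u j) (f a j) => [] [].
exists a, b; first by rewrite e_a h_b.
rewrite f_iso; apply: subset_leq_card; apply/subsetP => c.
rewrite !inE => fab; have cj : c != j by apply: contraNneq fab => ->; rewrite fb.
have ci : c != i by apply: contraNneq fab => ci; rewrite ci fa (fh i b) // -ci.
apply/forall_inP => p e_p; apply/forall_inP => q h_q.
by rewrite (fe c p) // (fh c q) // -(fe c a) // -(fh c b).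
Qed.

Lemma edist_sep e h : e \in edges g -> h \in edges g -> edist g e h = #|sep e h|.
Proof.
move=> Ee Eh; have [a [b /andP[e_a h_b] dab]] := gdist_sep Ee Eh.
have sep_T : #|sep e h| <= #|T| := leq_trans (sep_gdist e_a h_b) (ltnW (gdist_lt g_conn a b)).
apply/eqP; rewrite eqn_leq; apply/andP; split.
  apply: leq_trans (bigmin_leq _ _ (mem_index_enum a) e_a) _.
  exact: leq_trans (bigmin_leq _ _ (mem_index_enum b) h_b) dab.
by apply: leq_bigmin => // a' e_a'; apply: leq_bigmin => // b' h_b'; apply: sep_gdist.
Qed.

Lemma sepC e h : sep e h = sep h e.
Proof.
have sub (e1 e2 : {set T}) : sep e1 e2 \subset sep e2 e1.
  apply/subsetP => c; rewrite !inE => /forall_inP sep12.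
  apply/forall_inP => q e2_q; apply/forall_inP => p e1_p.
  by rewrite eq_sym; apply: (forall_inP (sep12 p e1_p)).
by apply/eqP; rewrite eqEsubset !sub.
Qed.

Lemma sepxx e : e \in edges g -> sep e e = set0.
Proof.
case/edgesP=> x [y [_ ->]]; apply/setP => c; rewrite !inE.
apply/negbTE/forall_inPn; exists x; rewrite ?setU11 //.
by apply/forall_inPn; exists x; rewrite ?setU11 ?eqxx.
Qed.

Lemma sum_edist_edges :
  \sum_(e in edges g) \sum_(h in edges g) edist g e h = 2 * edge_wiener g.
Proof.
rewrite (sum_sym_pairs (r := fun e => val (enum_rank e))); first last.
- by move=> e h Ee Eh; rewrite !edist_sep // sepC.
- by move=> e h /val_inj/enum_rank_inj.
by rewrite big1 // => e Ee; rewrite edist_sep // sepxx // cards0.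
Qed.

Section Decomposition.
Variables (d : nat) (c : 'I_d -> 'I_n) (U U' : 'I_d -> {set T}).
Hypotheses (c_inj : injective c)
  (c_onto : forall e i, e \in edges g -> cut e i -> exists k, c k = i)
  (U_half : forall k, exists b,
     U k = [set y | f y (c k) == b] /\ U' k = [set y | f y (c k) == ~~ b]).

Lemma across_sep k e h : e \in edges g -> h \in edges g ->
  across (U k) (U' k) e h = (c k \in sep e h).
Proof.
case/edgesP=> x [y [_ ->]] /edgesP[u [v [_ ->]]].
have [b [-> ->]] := U_half k; rewrite /across sep_pair !subUset !sub1set !inE.
by case: (f x (c k)) (f y (c k)) (f u (c k)) (f v (c k)) b => [] [] [] [] [].
Qed.

Lemma edist_sum e h : e \in edges g -> h \in edges g ->
  edist g e h = \sum_k (c k \in sep e h : nat).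
Proof.
move=> Ee Eh; rewrite edist_sep // -card_set_sum -(card_imset _ c_inj).
apply: eq_card => i; apply/idP/imsetP => [sep_i|[k]]; last by rewrite inE => ? ->.
have [k ck] : exists k, c k = i; last by exists k; rewrite // inE ck.
case/edgesP: Ee sep_i => x [y [_ ->]]; case/edgesP: Eh => u [v [_ ->]].
rewrite sep_pair => /and4P[fxu _ _ _].
by have [e' Ee' e'i] := exists_edge_cut fxu; apply: c_onto Ee' e'i.
Qed.

Lemma sum_sqr_edist :
  let m (A B : {set T}) := #|edges_in g A :&: edges_in g B| in
  \sum_(e in edges g) \sum_(h in edges g) (edist g e h) ^ 2
  = 2 * edge_wiener g
    + 4 * \sum_(k < d) \sum_(l < d | k < l)
            (m (U k) (U l) * m (U' k) (U' l) + m (U k) (U' l) * m (U' k) (U l)).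
Proof.
move=> m; rewrite -sum_edist_edges.
pose X k l e h := across (U k) (U' k) e h * across (U l) (U' l) e h.
transitivity (\sum_(e in edges g) \sum_(h in edges g)
    (edist g e h + 2 * \sum_(k < d) \sum_(l < d | k < l) X k l e h)).
  apply: eq_bigr => e Ee; apply: eq_bigr => h Eh.
  rewrite !edist_sum // sqr_sum_bool; congr (_ + 2 * _).
  by apply: eq_bigr => k _; apply: eq_bigr => l _; rewrite /X !across_sep.
under eq_bigr => e _ do rewrite big_split /=.
rewrite big_split /=; congr (_ + _).
under eq_bigr => e _ do rewrite -big_distrr /=.
rewrite -big_distrr /= (_ : 4 = 2 * 2) // -mulnA; congr (2 * _).
under eq_bigr => e _ do rewrite exchange_big.
rewrite exchange_big big_distrr; apply: eq_bigr => k _ /=.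
under eq_bigr => e _ do rewrite exchange_big.
rewrite exchange_big big_distrr; apply: eq_bigr => l _ /=.
exact: sum_across_mul.
Qed.

End Decomposition.

End PartialCube.

Theorem lemma3p3 (T : finType) (g : rel T)
  (Hs : simple_graph g) (Hc : connected_graph g) (Hpc : partial_cube g)
  (d : nat) (E : 'I_d -> {set {set T}})
  (HEinj : injective E)
  (HEcl : forall k, theta_class g (E k))
  (HEall : forall C, theta_class g C -> exists k, E k = C)
  (U U' : 'I_d -> {set T})
  (HU : forall k, component_of g (E k) (U k))
  (HU' : forall k, component_of g (E k) (U' k))
  (HUU' : forall k, U k != U' k) :
  let m (A B : {set T}) := #|edges_in g A :&: edges_in g B| in
  \sum_(e in edges g) \sum_(f in edges g) (edist g e f) ^ 2
  = 2 * edge_wiener g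
    + 4 * \sum_(k < d) \sum_(l < d | k < l)
            (m (U k) (U l) * m (U' k) (U' l) + m (U k) (U' l) * m (U' k) (U l)).
Proof.
case: Hs => _ g_irr; case: Hpc => n [f f_iso].
have [c Ec] := fin_all_exists (fun k => theta_classP g_irr Hc f_iso (HEcl k)).
apply: (sum_sqr_edist g_irr Hc f_iso (c := c)).
- by move=> k l ckl; apply: HEinj; rewrite !Ec ckl.
- move=> e i Ee ei; have [k Ek] := HEall _ (ex_intro2 _ _ e Ee erefl).
  exists k; have : e \in E k by rewrite Ek (theta_edge_class g_irr Hc f_iso Ee ei) inE Ee.
  by rewrite Ec inE Ee => /(cut_uniq g_irr Hc f_iso Ee)/(_ ei).
- by move=> k; apply: (components_cut_class g_irr Hc f_iso); rewrite -?Ec.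
Qed.
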